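(* Let $p/q$ be an even rational parameter and $P=2p/(p+q)$. For every tile center $c=(x,y)$, the label assigned to $(x,-y)$ by the tile description is obtained from the label assigned to $(x,y)$ by swapping N with S (and leaving E and W unchanged). Equivalently, the tiling produced by $(\Xi_P,X_P)$ is invariant under reflection in the $x$-axis.
   Context: An even rational parameter is a rational $p/q\in(0,1)$, $p,q$ positive coprime integers, $pq$ even; $\omega=p+q$, $P=2p/\omega$. Tile centers are the points $(m+\frac12,n+\frac12)$, $m,n\in\mathbb Z$; each is the center of a unit square with edges N, S, E, W. Let $\Lambda_P\subset\mathbb R^3$ be the lattice generated by $(2,P,P),(0,2,0),(0,0,2)$, $X_P=\mathbb R^3/\Lambda_P$ with coordinates $(T,U_1,U_2)$ and fundamental domain $[-1,1]^3$, and $\Xi_P(x,y)=(2Px+2y,2Px,2Px+2Py)\bmod\Lambda_P$. Each fiber $\{T\}\times[-1,1]^2$ is partitioned: given $u_1\le u_2\le u_3$, the lines $U_1=u_i$, $U_2=u_i$ cut $[-1,1]^2$ into a $4\times4$ grid of rectangles indexed by (column $a$, row $b$), columns in increasing $U_1$, rows in increasing $U_2$. Special rectangles with single letters: for $T\in[-1,-1+P]$: $(u_1,u_2,u_3)=(T,1-P,2-P+T)$, W $(4,4)$, N $(1,3)$, E $(2,2)$, S $(3,1)$; for $T\in[-1+P,1-P]$: $(-1+P,T,1-P)$, N $(1,4)$, E $(3,3)$, W $(2,2)$, S $(4,1)$; for $T\in[1-P,1]$: $(-2+P+T,-1+P,T)$, N $(2,4)$, W $(3,3)$, S $(4,2)$,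 E $(1,1)$. A non-special rectangle gets the unordered pair of letters of the special rectangles in its column and in its row; special rectangles get the empty label. The label of a tile center $c$ is the label of the rectangle whose interior contains the representative of $\Xi_P(c)$ in $[-1,1]^3$ (known to be well defined for even rational parameters); a label $\{X,Y\}$ is drawn as a segment joining the midpoints of edges $X$ and $Y$ of the unit square centered at $c$. *)

From HB Require Import structures.
From mathcomp Require Import all_boot all_order all_algebra.
Set Implicit Arguments. Unset Strict Implicit. Unset Printing Implicit Defensive.
Import Order.TTheory GRing.Theory Num.Theory.
Local Open Scope ring_scope.

(* The four edges of a unit square. *)
Inductive letter := N | S | E | W.

Definition letter_to (l : letter) : 'I_4 :=
  match l with N => inord 0 | S => inord 1 | E => inord 2 | W => inord 3 end.
Definition letter_of (i : 'I_4) : letter :=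
  match val i with 0 => N | 1 => S | 2 => E | _ => W end.
Lemma letterK : cancel letter_to letter_of.
Proof. by case; rewrite /letter_of /= inordK. Qed.
HB.instance Definition _ := Finite.copy letter (can_type letterK).

(* A label is a set of letters: the empty set (special rectangles) or an
   unordered pair {X, Y}. *)
Definition label := {set letter}.

Definition swapNS (l : letter) : letter :=
  match l with N => S | S => N | E => E | W => W end.

Definition even_rational_parameter (p q : nat) : Prop :=
  [/\ (0 < p)%N, (0 < q)%N, (p < q)%N, coprime p q & ~~ odd (p * q)].

Section Tiling.
Variable R : realFieldType.

Definition Ppar (p q : nat) : R := (2 * p)%:R / (p + q)%:R.

Definition pt3 := (R * R * R)%type.

Definition congr_Lambda (P : R) (v w : pt3) : Prop :=
  exists a b c : int,
    [/\ v.1.1 - w.1.1 = a%:~R * 2,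
        v.1.2 - w.1.2 = a%:~R * P + b%:~R * 2 &
        v.2 - w.2 = a%:~R * P + c%:~R * 2].

Definition in_fund_domain (v : pt3) : Prop :=
  [/\ -1 <= v.1.1 <= 1, -1 <= v.1.2 <= 1 & -1 <= v.2 <= 1].

Definition Xi (P : R) (c : R * R) : pt3 :=
  (2 * P * c.1 + 2 * c.2, 2 * P * c.1, 2 * P * c.1 + 2 * P * c.2).

Inductive case3 := Case1 | Case2 | Case3.

Definition case_range (P : R) (k : case3) (T : R) : Prop :=
  match k with
  | Case1 => -1 <= T <= -1 + P
  | Case2 => -1 + P <= T <= 1 - P
  | Case3 => 1 - P <= T <= 1
  end.

Definition case_u (P : R) (k : case3) (T : R) : R * R * R :=
  match k with
  | Case1 => (T, 1 - P, 2 - P + T)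
  | Case2 => (-1 + P, T, 1 - P)
  | Case3 => (-2 + P + T, -1 + P, T)
  end.

(* position (column a, row b) of the special rectangle carrying each letter *)
Definition case_special (k : case3) (l : letter) : nat * nat :=
  match k, l with
  | Case1, W => (4, 4)%N | Case1, N => (1, 3)%N
  | Case1, E => (2, 2)%N | Case1, S => (3, 1)%N
  | Case2, N => (1, 4)%N | Case2, E => (3, 3)%N
  | Case2, W => (2, 2)%N | Case2, S => (4, 1)%N
  | Case3, N => (2, 4)%N | Case3, W => (3, 3)%N
  | Case3, S => (4, 2)%N | Case3, E => (1, 1)%N
  end.

(* grid boundaries -1 = b0 <= u1 <= u2 <= u3 <= b4 = 1; strip i (1..4)
   is between boundary i-1 and boundary i *)
Definition bnd (u : R * R * R) (i : nat) : R :=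
  match i with
  | 0 => -1 | 1 => u.1.1 | 2 => u.1.2 | 3 => u.2 | _ => 1
  end.

Definition in_strip (u : R * R * R) (a : nat) (x : R) : Prop :=
  bnd u a.-1 < x < bnd u a.

Definition rect_label (k : case3) (a b : nat) : label :=
  if [exists l, case_special k l == (a, b)] then set0
  else [set l | (case_special k l).1 == a] :|: [set l | (case_special k l).2 == b].

Definition assigned (P : R) (c : R * R) (L : label) : Prop :=
  exists v : pt3,
    [/\ congr_Lambda P v (Xi P c), in_fund_domain v &
      exists k : case3, case_range P k v.1.1 /\
      exists a b : nat,
        [/\ (1 <= a <= 4)%N, (1 <= b <= 4)%N,
            in_strip (case_u P k v.1.1) a v.1.2,
            in_strip (case_u P k v.1.1) b v.2 &
            L = rect_label k a b]].

Definition tile_center (m n : int) : R * R :=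
  (m%:~R + 2^-1, n%:~R + 2^-1).

End Tiling.

From HB Require Import structures.
From mathcomp Require Import all_boot all_order all_algebra.
From mathcomp Require Import ring.
Import Order.TTheory GRing.Theory Num.Theory.
Local Open Scope ring_scope.

(* If Xi P (x, y) = (T, U1, U2) and k = 2y is an integer, then
   Xi P (x, -y) + k (2, P, P) = (T, U2, U1): up to Lambda_P, reflecting the
   tile center exchanges U1 and U2.  This transposes the fiber grid, and the
   special rectangles are placed so that transposition swaps the N and S
   squares and fixes the E and W ones. *)

Lemma swapNSK : involutive swapNS.
Proof. by case. Qed.

Lemma imset_swapNSK (L : label) : swapNS @: (swapNS @: L) = L.
Proof. by rewrite -imset_comp (eq_imset _ swapNSK) imset_id. Qed.

Lemma case_special_swapNS k l :
  case_special k (swapNS l) = ((case_special k l).2, (case_special k l).1).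
Proof. by case: k; case: l. Qed.

Lemma rect_label_transpose k a b :
  rect_label k b a = swapNS @: rect_label k a b.
Proof.
rewrite /rect_label.
have -> : [exists l, case_special k l == (b, a)] =
          [exists l, case_special k l == (a, b)].
  apply/existsP/existsP => -[l Hl]; exists (swapNS l);
  by move: Hl; rewrite case_special_swapNS !xpair_eqE andbC.
case: ifP => _; first by rewrite imset0.
rewrite (can_imset_pre _ swapNSK); apply/setP => l.
by rewrite !inE case_special_swapNS /= orbC.
Qed.

Section Reflection.
Variable R : realFieldType.
Implicit Types (P : R) (v : pt3 R) (c : R * R).

Definition swapU v : pt3 R := (v.1.1, v.2, v.1.2).

Lemma in_fund_domain_swapU v : in_fund_domain v -> in_fund_domain (swapU v).
Proof. by case. Qed.

Lemma congr_Lambda_reflect P v c (k : int) :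
  2 * c.2 = k%:~R ->
  congr_Lambda P v (Xi P c) -> congr_Lambda P (swapU v) (Xi P (c.1, - c.2)).
Proof.
move=> Hk [a [b [b' [/= HT HU1 HU2]]]].
exists (a + k), b', b; rewrite intrD -Hk; split => /=.
- by rewrite -[v.1.1](subrK (2 * P * c.1 + 2 * c.2)) HT; ring.
- by rewrite -[v.2](subrK (2 * P * c.1 + 2 * P * c.2)) HU2; ring.
- by rewrite -[v.1.2](subrK (2 * P * c.1)) HU1; ring.
Qed.

Lemma assigned_reflect P c (L : label) (k : int) :
  2 * c.2 = k%:~R ->
  assigned P c L -> assigned P (c.1, - c.2) (swapNS @: L).
Proof.
move=> Hk [v [Hv Dv [K [HK [a [b [Ha Hb Hsa Hsb ->]]]]]]].
exists (swapU v); split.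
- exact: congr_Lambda_reflect Hk Hv.
- exact: in_fund_domain_swapU.
- exists K; split => //; exists b, a; split => //.
  exact/esym/rect_label_transpose.
Qed.

Lemma tile_center_double_y (m n : int) :
  2 * (tile_center R m n).2 = (2 * n + 1)%:~R.
Proof. by rewrite /= mulrDr mulfV ?pnatr_eq0 // intrD intrM rmorph1. Qed.

End Reflection.

Theorem lemma3p5 (R : realFieldType) (p q : nat) :
  even_rational_parameter p q ->
  forall (m n : int) (L : label),
    let c := tile_center R m n in
    assigned (Ppar R p q) c L <->
    assigned (Ppar R p q) (c.1, - c.2) (swapNS @: L).
Proof.
move=> _ m n L c.
have Hc : 2 * c.2 = (2 * n + 1)%:~R by exact: tile_center_double_y.
have Hc' : 2 * (- c.2) = (- (2 * n + 1))%:~R by rewrite intrN -Hc mulrN.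
split; first exact: assigned_reflect Hc.
move=> /(@assigned_reflect _ _ (c.1, - c.2) _ _ Hc') /=.
by rewrite opprK imset_swapNSK.
Qed.
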